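(* Let $M\in\mathrm{rep}\,G_{m,n}$ be interval-decomposable and $I\in\mathbb{I}_{m,n}$. Then for each $\ast\in\{ss,cc,tot\}$, $$\bar d^\ast_M(I)=\sum_{J\in U(I)} d_M(V_J).$$
   Context: Fix a field $K$. For integers $m,n\ge1$, $G_{m,n}$ is the equioriented commutative $m\times n$ grid: the quiver with vertex set $\{(i,j):1\le i\le m,\ 1\le j\le n\}$ and arrows $(i,j)\to(i,j+1)$ and $(i,j)\to(i+1,j)$, bound by all commutativity relations; $\mathrm{rep}\,G_{m,n}$ is its category of finite-dimensional representations over $K$ satisfying the relations. For an indecomposable $L$, $d_M(L)$ is the multiplicity of $L$ in a Krull–Schmidt decomposition of $M$. An interval of $G_{m,n}$ is a nonempty full subquiver $I$ which is connected (as an undirected graph) and convex (whenever $x,y\in I_0$ and there are paths $x\to z$, $z\to y$ in $G_{m,n}$, then $z\in I_0$); $\mathbb{I}_{m,n}$ is the set of intervals ordered by inclusion of vertex sets, and $U(I)=\{J\in\mathbb{I}_{m,n}:I\le J\}$. The interval representation $V_I$ has $K$ at vertices of $I$, $0$ elsewhere, identity maps on arrows inside $I$ and zero maps otherwise; $M$ is interval-decomposable if it is isomorphic to a direct sum of interval representations. Essential vertices: $I^{ss}_0$ is the set of sources and sinks of the quiver $I$; $I^{cc}_0=I_0\cap(\mathrm{pr}_1(I^{ss}_0)\times\mathrm{pr}_2(I^{ss}_0))$ with $\mathrm{pr}_1,\mathrm{pr}_2$ coordinate projections; $I^{tot}_0=I_0$. Let $KG_{m,n}$ be the $K$-linear category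 whose objects are the vertices and whose morphisms are $K$-linear combinations of paths modulo the commutativity relations; representations are $K$-linear functors $KG_{m,n}\to\mathrm{vect}_K$. For $\ast\in\{ss,cc,tot\}$, $\mathcal{C}^\ast_I$ is the full subcategory of $KG_{m,n}$ on $I^\ast_0$, and $M^\ast_I:=M|_{\mathcal{C}^\ast_I}$. The compressed multiplicity $\bar d^\ast_M(I)$ is the multiplicity of the indecomposable $(V_I)^\ast_I$ as a direct summand of $M^\ast_I$. *)

From HB Require Import structures.
From mathcomp Require Import all_boot all_order all_algebra.
Set Implicit Arguments. Unset Strict Implicit. Unset Printing Implicit Defensive.
Import GRing.Theory.
Local Open Scope ring_scope.

Section Grid.
Variables (K : fieldType) (m n : nat).

(* vertices of G_{m,n}, 0-indexed: (i,j) with i < m, j < n *)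
Definition vtx := ('I_m * 'I_n)%type.

Definition gle (x y : vtx) : bool := ((x.1 <= y.1)%N && (x.2 <= y.2)%N).

Definition garrow (x y : vtx) : bool :=
  ((x.1 == y.1 :> nat) && (x.2.+1 == y.2 :> nat)) ||
  ((x.1.+1 == y.1 :> nat) && (x.2 == y.2 :> nat)).

Definition adjI (I : {set vtx}) : rel vtx :=
  fun x y => [&& x \in I, y \in I & garrow x y || garrow y x].

Definition is_interval (I : {set vtx}) : bool :=
  [&& I != set0,
      [forall x in I, forall y in I, connect (adjI I) x y] &
      [forall x in I, forall y in I, forall z,
          (gle x z && gle z y) ==> (z \in I)]].

Definition is_source (I : {set vtx}) (x : vtx) : bool :=
  (x \in I) && [forall y in I, ~~ garrow y x].
Definition is_sink (I : {set vtx}) (x : vtx) : bool :=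
  (x \in I) && [forall y in I, ~~ garrow x y].
Definition ss_set (I : {set vtx}) : {set vtx} :=
  [set x | is_source I x || is_sink I x].
Definition cc_set (I : {set vtx}) : {set vtx} :=
  [set x in I | (x.1 \in [set y.1 | y in ss_set I]) &&
                (x.2 \in [set y.2 | y in ss_set I])].

Inductive ess := SS | CC | TOT.
Definition ess_set (e : ess) (I : {set vtx}) : {set vtx} :=
  match e with SS => ss_set I | CC => cc_set I | TOT => I end.

(* Data of a representation of (a full subcategory of) K G_{m,n}:
   a space K^(pdim x) at each vertex and a matrix pmap x y for the
   (unique up to scalar) morphism x -> y; row-vector convention
   (v |-> v *m pmap x y). Only the data at vertices of S and for x <= y
   is relevant for a representation on the full subcategory on S. *)
Record prep := PRep {
  pdim : vtx -> nat;
  pmap : forall x y : vtx, 'M[K]_(pdim x, pdim y) }.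

Definition is_rep (S : {set vtx}) (M : prep) : Prop :=
  (forall x, x \in S -> pmap M x x = 1%:M) /\
  (forall x y z, x \in S -> y \in S -> z \in S -> gle x y -> gle y z ->
     pmap M x y *m pmap M y z = pmap M x z).

(* The restriction M|_{C_S} has the same data, read on S only. *)
Definition restrict (S : {set vtx}) (M : prep) : prep := M.

Definition iso (S : {set vtx}) (A B : prep) : Prop :=
  exists (phi : forall x, 'M[K]_(pdim A x, pdim B x))
         (psi : forall x, 'M[K]_(pdim B x, pdim A x)),
    (forall x, x \in S -> phi x *m psi x = 1%:M /\ psi x *m phi x = 1%:M) /\
    (forall x y, x \in S -> y \in S -> gle x y ->
       pmap A x y *m phi y = phi x *m pmap B x y).

(* M is (isomorphic to) the direct sum of the family N, expressed as a
   biproduct: injections/projections, natural, with the biproduct identities *)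
Definition dsum (S : {set vtx}) (M : prep) (Ix : finType) (N : Ix -> prep)
  : Prop :=
  exists (inj : forall t x, 'M[K]_(pdim (N t) x, pdim M x))
         (prj : forall t x, 'M[K]_(pdim M x, pdim (N t) x)),
    (forall x, x \in S -> \sum_t prj t x *m inj t x = 1%:M) /\
    (forall x t, x \in S -> inj t x *m prj t x = 1%:M) /\
    (forall x t s, x \in S -> t != s -> inj t x *m prj s x = 0) /\
    (forall x y t, x \in S -> y \in S -> gle x y ->
       inj t x *m pmap M x y = pmap (N t) x y *m inj t y) /\
    (forall x y t, x \in S -> y \in S -> gle x y ->
       pmap M x y *m prj t y = prj t x *m pmap (N t) x y).

Definition is_zero (S : {set vtx}) (A : prep) : Prop :=
  forall x, x \in S -> pdim A x = 0%N.

Definition indecomposable (S : {set vtx}) (L : prep) : Prop :=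
  is_rep S L /\ ~ is_zero S L /\
  forall A B : prep, is_rep S A -> is_rep S B ->
    dsum S L (fun b : bool => if b then A else B) ->
    is_zero S A \/ is_zero S B.

Definition KS_decomp (S : {set vtx}) (M : prep) (Ix : finType)
  (N : Ix -> prep) : Prop :=
  (forall t, indecomposable S (N t)) /\ dsum S M N.

Definition Vrep (I : {set vtx}) : prep :=
  @PRep (fun x => nat_of_bool (x \in I))
        (fun x y => const_mx (if [&& x \in I, y \in I & gle x y]
                              then 1 else 0)).

Definition interval_decomposable (M : prep) : Prop :=
  exists (Ix : finType) (J : Ix -> {set vtx}),
    (forall t, is_interval (J t)) /\ dsum setT M (fun t => Vrep (J t)).

End Grid.

From HB Require Import structures.
From mathcomp Require Import all_boot all_order all_algebra.
From mathcomp Require Import boolp zify.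

(* Fix Q within S and x0 in Q, and let mult_V S Q x0 M be the largest k such that,
   on the full subcategory on S, some pair of morphisms V_Q^k -> M -> V_Q^k composes
   to the identity at x0.  This number is additive on direct sums: the identity of
   K^k then splits into maps factoring through the summands, and ranks are
   subadditive; conversely split copies found in distinct summands stack up.  When
   Q is convex in S and connected there by comparable pairs, the composite is the
   identity at every vertex of Q, so V_Q^k is a direct summand; on an indecomposable
   module the number is therefore 1 or 0 according to whether it is isomorphic to V_Q.

   With S = I^* and Q = I it counts the summands of M^*_I isomorphic to (V_I)^*_I.
   Computed instead on the interval summands V_J of M (and every Krull-Schmidt
   summand of M is one), V_J contributes exactly when I is contained in J, because
   an interval is the convex hull of its sources and sinks, all of which lie in I^*. *)

Set Implicit Arguments.
Unset Strict Implicit.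
Unset Printing Implicit Defensive.

Import GRing.Theory.
Local Open Scope ring_scope.

Lemma mxrank_sum_le (K : fieldType) (I : finType) p q (f : I -> 'M[K]_(p, q)) :
  (\rank (\sum_i f i)%R <= \sum_i \rank (f i))%N.
Proof.
elim/big_ind2: _ => [|A1 k1 A2 k2 le1 le2|//]; first by rewrite mxrank0.
exact: leq_trans (mxrank_add _ _) (leq_add le1 le2).
Qed.

Lemma big_unit (R : Type) (idx : R) (op : Monoid.com_law idx) (F : unit -> R) :
  \big[op/idx]_(t : unit) F t = F tt.
Proof. by rewrite (big_pred1 tt) // => -[]. Qed.

Lemma sum_nat_eq (T : finType) (P : pred T) (a : T) :
  (\sum_(b | P b) (a == b))%N = P a.
Proof.
rewrite big_mkcond (bigD1 a) //= eqxx big1 ?addn0; first by case: (P a).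
by move=> b /negbTE nab; rewrite eq_sym nab if_same.
Qed.

Lemma connect_exit (T : finType) (e : rel T) (A : {pred T}) x y :
  connect e x y -> x \in A -> y \notin A ->
  exists u w, [/\ e u w, u \in A & w \notin A].
Proof.
move=> /connectP [p path_p ->]; elim: p x path_p => [|z p IHp] x /=; first by move=> _ ->.
move=> /andP [xz path_p] xA; have [zA | zNA] := boolP (z \in A); first exact: IHp.
by move=> _; exists x, z.
Qed.

Section ConstMatrices.
Variable K : fieldType.

Lemma mul_const_mx p q r (a c : K) :
  (const_mx a : 'M_(p, q)) *m (const_mx c : 'M_(q, r)) = const_mx (a * c *+ q).
Proof.
apply/matrixP => i j; rewrite !mxE.
by under eq_bigr do rewrite !mxE; rewrite sumr_const card_ord.
Qed.

Lemma const_mx_nat_of_bool (b : bool) (c : K) :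
  (b -> c = 1) -> (const_mx c : 'M_(nat_of_bool b)) = 1%:M.
Proof.
case: b => [c1|_]; last by rewrite [LHS]flatmx0 [RHS]flatmx0.
by apply/matrixP => i j; rewrite !mxE c1 // (ord1 i) (ord1 j).
Qed.

Lemma eq_const_mx_nat_of_bool (b1 b2 : bool) (c c' : K) :
  (b1 -> b2 -> c = c') ->
  (const_mx c : 'M_(nat_of_bool b1, nat_of_bool b2)) = const_mx c'.
Proof.
move=> eq_c; apply/matrixP => -[i lt_i] [j lt_j]; rewrite !mxE.
by case: b1 b2 eq_c lt_i lt_j => [] [] //= ->.
Qed.

Lemma mulmx_nat_of_false p q (b : bool) (A : 'M[K]_(p, nat_of_bool b))
    (B : 'M_(nat_of_bool b, q)) :
  b = false -> A *m B = 0.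
Proof. by move: A B; case: b => // A B _; rewrite [A]thinmx0 mul0mx. Qed.

(* [const_mx 1 : 'M_(nat_of_bool b, 1)] turns a row into a map out of the 0- or
   1-dimensional space of an interval module at a vertex. *)
Lemma const_mx_sandwich (b : bool) (A : 'M[K]_1) :
  (b -> A = 1%:M) -> (const_mx 1 : 'M_(nat_of_bool b, 1)) *m A *m const_mx 1 = 1%:M.
Proof.
case: b => [A1|_]; last by rewrite [LHS]flatmx0 [RHS]flatmx0.
by rewrite A1 // mulmx1 mul_const_mx; apply: (const_mx_nat_of_bool (b := true)); rewrite mulr1.
Qed.

Lemma const_mx_row_nat (b1 b2 : bool) (c : K) d (U W : 'M[K]_(1, d)) :
  (b1 -> b2 -> c = 1) -> (b1 -> U = if b2 then W else 0) ->
  (const_mx c : 'M_(nat_of_bool b1, nat_of_bool b2)) *m (const_mx 1 *m W) =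
  const_mx 1 *m U.
Proof.
case: b1 => [c1 hU|_ _]; last by rewrite [LHS]flatmx0 [RHS]flatmx0.
rewrite hU //; case: b2 c1 {hU} => [c1|_]; last by rewrite mulmx0 mulmx_nat_of_false.
by rewrite c1 // mulmxA mul_const_mx mulr1.
Qed.

Lemma const_mx_col_nat (b1 b2 : bool) (c : K) d (U W : 'M[K]_(d, 1)) :
  (b1 -> b2 -> c = 1) -> (b2 -> U = if b1 then W else 0) ->
  U *m const_mx 1 =
  W *m const_mx 1 *m (const_mx c : 'M_(nat_of_bool b1, nat_of_bool b2)).
Proof.
case: b2 => [c1 hU|_ _]; last by rewrite [LHS]thinmx0 [RHS]thinmx0.
rewrite hU //; case: b1 c1 {hU} => [c1|_]; last by rewrite mul0mx mulmx_nat_of_false.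
by rewrite c1 // -mulmxA mul_const_mx mulr1.
Qed.

End ConstMatrices.

Section GridOrder.
Variables m n : nat.
Local Notation vtx := (vtx m n).

Lemma gle_refl (x : vtx) : gle x x.
Proof. by rewrite /gle !leqnn. Qed.

Lemma gle_trans (x y z : vtx) : gle x y -> gle y z -> gle x z.
Proof. by rewrite /gle => /andP [? ?] /andP [? ?]; apply/andP; split; lia. Qed.

End GridOrder.

Section SplitCopies.
Variables (K : fieldType) (m n : nat).
Local Notation vtx := (vtx m n).
Local Notation prep := (prep K m n).
Implicit Types (S Q : {set vtx}) (M : prep).

(* The components of morphisms V_Q^k -> M and M -> V_Q^k on the full subcategory
   on S, in the row-vector convention; components outside Q are irrelevant. *)
Definition hom_from_V S Q M k (V : forall x, 'M[K]_(k, pdim M x)) : Prop :=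
  forall x y, x \in S -> y \in S -> gle x y -> x \in Q ->
    V x *m pmap M x y = if y \in Q then V y else 0.

Definition hom_to_V S Q M k (F : forall x, 'M[K]_(pdim M x, k)) : Prop :=
  forall x y, x \in S -> y \in S -> gle x y -> y \in Q ->
    pmap M x y *m F y = if x \in Q then F x else 0.

Definition splits_V S Q x0 M k : Prop := exists V F,
  [/\ @hom_from_V S Q M k V, @hom_to_V S Q M k F & V x0 *m F x0 = 1%:M].

Definition mult_V S Q x0 M : nat :=
  \max_(k < (pdim M x0).+1 | `[< splits_V S Q x0 M k >]) k.

Variables (S Q : {set vtx}) (x0 : vtx).

Lemma hom_from_V_mull M k j (A : 'M_(j, k)) V :
  @hom_from_V S Q M k V -> @hom_from_V S Q M j (fun x => A *m V x).
Proof.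
by move=> hV x y xS yS xy xQ; rewrite -mulmxA hV //; case: ifP; rewrite ?mulmx0.
Qed.

Lemma hom_to_V_mulr M k j (A : 'M_(k, j)) F :
  @hom_to_V S Q M k F -> @hom_to_V S Q M j (fun x => F x *m A).
Proof.
by move=> hF x y xS yS xy yQ; rewrite mulmxA hF //; case: ifP; rewrite ?mul0mx.
Qed.

Lemma hom_from_V0 M : @hom_from_V S Q M 0 (fun x => 0).
Proof. by move=> x y *; rewrite mul0mx; case: ifP. Qed.

Lemma hom_to_V0 M : @hom_to_V S Q M 0 (fun x => 0).
Proof. by move=> x y *; rewrite mulmx0; case: ifP. Qed.

Lemma splits_V0 M : splits_V S Q x0 M 0.
Proof.
exists (fun x => 0), (fun x => 0); split; [exact: hom_from_V0 | exact: hom_to_V0 |].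
by rewrite [LHS]flatmx0 [RHS]flatmx0.
Qed.

Lemma splits_V_dim M k : splits_V S Q x0 M k -> (k <= pdim M x0)%N.
Proof. by case=> V [F [_ _ /mulmx1_min]]. Qed.

Lemma splits_V_le M k j : splits_V S Q x0 M k -> (j <= k)%N -> splits_V S Q x0 M j.
Proof.
case=> V [F [hV hF VF1]] jk.
exists (fun x => pid_mx j *m V x), (fun x => F x *m pid_mx j); split.
- exact: hom_from_V_mull.
- exact: hom_to_V_mulr.
rewrite mulmxA -(mulmxA _ (V x0)) VF1 mulmx1 mul_pid_mx.
by rewrite minnn (minn_idPr jk) pid_mx_1.
Qed.

Lemma leq_mult_V M k : splits_V S Q x0 M k -> (k <= mult_V S Q x0 M)%N.
Proof.
move=> hk; have k_lt : (k < (pdim M x0).+1)%N by rewrite ltnS splits_V_dim.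
by apply: (leq_bigmax_cond (Ordinal k_lt)); apply/asboolP.
Qed.

Lemma splits_mult_V M : splits_V S Q x0 M (mult_V S Q x0 M).
Proof.
have [|k /asboolP hk Ek] :=
  @eq_bigmax_cond _ (fun k : 'I_(pdim M x0).+1 => `[< splits_V S Q x0 M k >]) val.
  by apply/card_gt0P; exists ord0; apply/asboolP/splits_V0.
by have -> : mult_V S Q x0 M = k := Ek.
Qed.

Lemma mult_V_gt0P M : (0 < mult_V S Q x0 M)%N <-> splits_V S Q x0 M 1.
Proof.
split; first exact: splits_V_le (splits_mult_V M).
exact: leq_mult_V.
Qed.

Lemma mxrank_comp_le_mult_V M k V F :
  @hom_from_V S Q M k V -> @hom_to_V S Q M k F ->
  (\rank (V x0 *m F x0) <= mult_V S Q x0 M)%N.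
Proof.
move=> hV hF; set G := V x0 *m F x0; set r : nat := \rank G.
set L := col_ebase G; set U := row_ebase G.
have EG : G = L *m pid_mx r *m U := esym (mulmx_ebase G).
apply: leq_mult_V.
exists (fun x => pid_mx r *m invmx L *m V x),
       (fun x => F x *m (invmx U *m pid_mx r)); split.
- exact: hom_from_V_mull.
- exact: hom_to_V_mulr.
rewrite !mulmxA -(mulmxA _ (V x0)) -/G EG !mulmxA.
rewrite mulmxKV ?col_ebase_unit // mulmxK ?row_ebase_unit // !mul_pid_mx.
have r_le_k : (r <= k)%N := rank_leq_row G.
by rewrite (_ : minn _ _ = r) ?pid_mx_1 //; lia.
Qed.

End SplitCopies.

Section DirectSums.
Variables (K : fieldType) (m n : nat).
Local Notation vtx := (vtx m n).
Local Notation prep := (prep K m n).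
Variables (S Q : {set vtx}) (x0 : vtx) (M : prep) (Ix : finType) (N : Ix -> prep).
Variables (inj : forall t x, 'M[K]_(pdim (N t) x, pdim M x))
          (prj : forall t x, 'M[K]_(pdim M x, pdim (N t) x)).
Hypotheses (sum_prj_inj : \sum_t prj t x0 *m inj t x0 = 1%:M)
  (inj_prj : forall t, inj t x0 *m prj t x0 = 1%:M)
  (inj_prj_neq : forall t s, t != s -> inj t x0 *m prj s x0 = 0)
  (inj_nat : forall x y t, x \in S -> y \in S -> gle x y ->
     inj t x *m pmap M x y = pmap (N t) x y *m inj t y)
  (prj_nat : forall x y t, x \in S -> y \in S -> gle x y ->
     pmap M x y *m prj t y = prj t x *m pmap (N t) x y).

Lemma hom_from_V_prj t k (V : forall x, 'M_(k, pdim M x)) :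
  hom_from_V S Q V -> hom_from_V S Q (fun x => V x *m prj t x).
Proof.
move=> hV x y xS yS xy xQ; rewrite -mulmxA -prj_nat // mulmxA hV //.
by case: ifP; rewrite ?mul0mx.
Qed.

Lemma hom_to_V_inj t k (F : forall x, 'M_(pdim M x, k)) :
  hom_to_V S Q F -> hom_to_V S Q (fun x => inj t x *m F x).
Proof.
move=> hF x y xS yS xy yQ; rewrite mulmxA -inj_nat // -mulmxA hF //.
by case: ifP; rewrite ?mulmx0.
Qed.

Lemma hom_from_V_inj t k (V : forall x, 'M_(k, pdim (N t) x)) :
  hom_from_V S Q V -> hom_from_V S Q (fun x => V x *m inj t x).
Proof.
move=> hV x y xS yS xy xQ; rewrite -mulmxA inj_nat // mulmxA hV //.
by case: ifP; rewrite ?mul0mx.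
Qed.

Lemma hom_to_V_prj t k (F : forall x, 'M_(pdim (N t) x, k)) :
  hom_to_V S Q F -> hom_to_V S Q (fun x => prj t x *m F x).
Proof.
move=> hF x y xS yS xy yQ; rewrite mulmxA prj_nat // -mulmxA hF //.
by case: ifP; rewrite ?mulmx0.
Qed.

Lemma mult_V_biprod_le :
  (mult_V S Q x0 M <= \sum_t mult_V S Q x0 (N t))%N.
Proof.
have [V [F [hV hF VF1]]] := splits_mult_V S Q x0 M.
have -> : mult_V S Q x0 M =
    \rank (\sum_t (V x0 *m prj t x0) *m (inj t x0 *m F x0))%R.
  rewrite -[LHS](mxrank1 K) -VF1 -{1}(mulmx1 (V x0)) -sum_prj_inj.
  rewrite mulmx_sumr mulmx_suml; congr (\rank _).
  by apply: eq_bigr => t _; rewrite !mulmxA.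
apply: leq_trans (mxrank_sum_le _) _; apply: leq_sum => t _.
exact: mxrank_comp_le_mult_V (hom_from_V_prj _ hV) (hom_to_V_inj _ hF).
Qed.

(* Split copies of V_Q supported on the summands indexed by s. *)
Definition splits_V_in (s : seq Ix) k : Prop := exists V F,
  [/\ @hom_from_V K m n S Q M k V, @hom_to_V K m n S Q M k F,
      V x0 *m F x0 = 1%:M &
      forall u, u \notin s -> V x0 *m prj u x0 = 0 /\ inj u x0 *m F x0 = 0].

Lemma splits_V_in_nil : splits_V_in [::] 0.
Proof.
exists (fun x => 0), (fun x => 0); split.
- exact: hom_from_V0.
- exact: hom_to_V0.
- by rewrite [LHS]flatmx0 [RHS]flatmx0.
by move=> u _; rewrite mul0mx mulmx0.
Qed.

Lemma splits_V_in_cons t s k : t \notin s -> splits_V_in s k ->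
  splits_V_in (t :: s) (k + mult_V S Q x0 (N t)).
Proof.
move=> tNs [V [F [hV hF VF1 out_s]]].
have [Vt [Ft [hVt hFt VFt1]]] := splits_mult_V S Q x0 (N t).
have [Vprj0 injF0] := out_s t tNs.
exists (fun x => col_mx (V x) (Vt x *m inj t x)),
       (fun x => row_mx (F x) (prj t x *m Ft x)); split.
- move=> x y xS yS xy xQ; rewrite mul_col_mx hV // (hom_from_V_inj hVt) //.
  by case: ifP; rewrite ?col_mx0.
- move=> x y xS yS xy yQ; rewrite mul_mx_row hF // (hom_to_V_prj hFt) //.
  by case: ifP; rewrite ?row_mx0.
- rewrite mul_col_row VF1 mulmxA Vprj0 mul0mx -mulmxA injF0 mulmx0.
  by rewrite mulmxA -(mulmxA (Vt x0)) inj_prj mulmx1 VFt1 -scalar_mx_block.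
move=> u; rewrite inE negb_or => /andP [uNt uNs].
have [Vprj0' injF0'] := out_s u uNs.
rewrite mul_col_mx mul_mx_row Vprj0' injF0' -(mulmxA (Vt x0)) (mulmxA (inj u x0)).
by rewrite !inj_prj_neq ?mulmx0 ?mul0mx ?col_mx0 ?row_mx0 // eq_sym.
Qed.

Lemma mult_V_biprod_ge :
  (\sum_t mult_V S Q x0 (N t) <= mult_V S Q x0 M)%N.
Proof.
suff [V [F [hV hF VF1 _]]] : splits_V_in (enum Ix) (\sum_t mult_V S Q x0 (N t)).
  by apply: leq_mult_V; exists V, F.
rewrite -big_enum /=; elim: (enum Ix) (enum_uniq Ix) => [_|t s IHs].
  by rewrite big_nil; exact: splits_V_in_nil.
rewrite cons_uniq big_cons addnC => /andP [tNs s_uniq].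
exact: splits_V_in_cons (IHs s_uniq).
Qed.

End DirectSums.

Lemma mult_V_dsum (K : fieldType) m n (S Q : {set vtx m n}) x0 (M : prep K m n)
    (Ix : finType) (N : Ix -> prep K m n) :
  x0 \in S -> dsum S M N -> mult_V S Q x0 M = (\sum_t mult_V S Q x0 (N t))%N.
Proof.
move=> x0S [inj [prj [sum1 [inj_prj [inj_prj_neq [inj_nat prj_nat]]]]]].
apply/eqP; rewrite eqn_leq (mult_V_biprod_le Q (sum1 x0 x0S) inj_nat prj_nat).
by rewrite (mult_V_biprod_ge Q (fun t => inj_prj x0 t x0S)
  (fun t s => inj_prj_neq x0 t s x0S) inj_nat prj_nat).
Qed.

Section Restriction.
Variables (K : fieldType) (m n : nat).
Local Notation vtx := (vtx m n).
Local Notation prep := (prep K m n).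
Implicit Types (S Q : {set vtx}) (A B M : prep).

Lemma dsum_subset S S' M (Ix : finType) (N : Ix -> prep) :
  S' \subset S -> dsum S M N -> dsum S' M N.
Proof.
move=> /subsetP sub [inj [prj [h1 [h2 [h3 [h4 h5]]]]]].
exists inj, prj; do ![split]
  => [x /sub|x t /sub|x t s /sub|x y t /sub xS /sub|x y t /sub xS /sub];
  by [apply: h1 | apply: h2 | apply: h3 | apply: h4 | apply: h5].
Qed.

Lemma iso_subset S S' A B : S' \subset S -> iso S A B -> iso S' A B.
Proof.
move=> /subsetP sub [phi [psi [h1 h2]]]; exists phi, psi.
by split=> [x /sub | x y /sub xS /sub yS]; [apply: h1 | apply: h2].
Qed.

Lemma iso_pdim S A B x : x \in S -> iso S A B -> pdim A x = pdim B x.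
Proof.
move=> xS [phi [psi [inv _]]]; have [phi_psi psi_phi] := inv x xS.
by apply/eqP; rewrite eqn_leq (mulmx1_min phi_psi) (mulmx1_min psi_phi).
Qed.

Lemma iso_dsum S A B : iso S A B -> dsum S A (fun _ : unit => B).
Proof.
move=> [phi [psi [inv nat_phi]]].
exists (fun _ => psi), (fun _ => phi); do ![split].
- by move=> x xS; rewrite big_unit; case: (inv x xS).
- by move=> x _ xS; case: (inv x xS).
- by move=> x [] [].
- move=> x y _ xS yS xy; have [_ psi_phi] := inv x xS; have [phi_psi _] := inv y yS.
  rewrite -[LHS]mulmx1 -phi_psi !mulmxA -(mulmxA (psi x)) nat_phi //.
  by rewrite !mulmxA psi_phi mul1mx.
- by move=> x y _ xS yS xy; rewrite nat_phi.
Qed.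

Lemma mult_V_iso S Q x0 A B :
  x0 \in S -> iso S A B -> mult_V S Q x0 A = mult_V S Q x0 B.
Proof. by move=> x0S /iso_dsum/(mult_V_dsum Q x0S); rewrite big_unit. Qed.

Lemma mult_V_set1 M x : pmap M x x = 1%:M -> mult_V [set x] [set x] x M = pdim M x.
Proof.
move=> Mxx; apply/eqP; rewrite eqn_leq (splits_V_dim (splits_mult_V _ _ _ _)) /=.
apply: leq_mult_V; exists (fun y => pid_mx (pdim M x)), (fun y => pid_mx (pdim M x)).
split=> [y z /set1P -> /set1P -> _ _ | y z /set1P -> /set1P -> _ _ |];
  by rewrite ?inE ?eqxx ?Mxx pid_mx_1 ?mulmx1 ?mul1mx.
Qed.

Lemma pdim_dsum S M (Ix : finType) (N : Ix -> prep) x :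
  x \in S -> dsum S M N -> pmap M x x = 1%:M -> (forall t, pmap (N t) x x = 1%:M) ->
  pdim M x = (\sum_t pdim (N t) x)%N.
Proof.
move=> xS dsumM Mxx Nxx.
have dsum1 : dsum [set x] M N by apply: dsum_subset dsumM; rewrite sub1set.
rewrite -mult_V_set1 // (mult_V_dsum _ (set11 x) dsum1).
by apply: eq_bigr => t _; rewrite mult_V_set1.
Qed.

End Restriction.

Section IntervalReps.
Variables (K : fieldType) (m n : nat).
Local Notation vtx := (vtx m n).
Local Notation prep := (prep K m n).
Implicit Types (S Q : {set vtx}) (M : prep).

Definition comparable_in S Q : rel vtx := fun x y =>
  [&& x \in S, x \in Q, y \in S, y \in Q & gle x y || gle y x].

Definition comparably_connected S Q x0 : Prop :=
  forall x, x \in S -> x \in Q -> connect (comparable_in S Q) x0 x.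

Definition convex_in S Q : Prop := forall x y z : vtx,
  x \in S -> y \in S -> z \in S -> x \in Q -> z \in Q ->
  gle x y -> gle y z -> y \in Q.

Lemma Vrep_rep S Q : convex_in S Q -> is_rep S (Vrep K Q).
Proof.
move=> convQ; split=> [x xS | x y z xS yS zS xy yz] /=.
  by apply: const_mx_nat_of_bool => ->; rewrite gle_refl.
rewrite mul_const_mx; apply: eq_const_mx_nat_of_bool => xQ zQ.
by rewrite xQ zQ (gle_trans xy yz) xy yz (convQ x y z) //= mulr1.
Qed.

Lemma hom_V_comp_const S Q x0 M k V F :
  @hom_from_V K m n S Q M k V -> @hom_to_V K m n S Q M k F ->
  comparably_connected S Q x0 ->
  forall x, x \in S -> x \in Q -> V x *m F x = V x0 *m F x0.
Proof.
move=> hV hF conn x xS xQ; have /connectP [p path_p ->] := conn x xS xQ.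
elim: p x0 path_p {conn x xS xQ} => //= y p IHp x /andP [xy_cmp path_p].
rewrite IHp //; move: xy_cmp => /and5P [xS xQ yS yQ /orP [xy|yx]].
  by have := hV x y xS yS xy xQ; rewrite yQ => <-; rewrite -mulmxA hF // xQ.
by have := hF y x yS xS yx xQ; rewrite yQ => <-; rewrite mulmxA hV // xQ.
Qed.

Lemma mult_V_Vrep S Q Q' x0 :
  x0 \in S -> x0 \in Q -> {in S, Q' =i Q} -> mult_V S Q x0 (Vrep K Q') = 1%N.
Proof.
move=> x0S x0Q eqQ; apply/eqP; rewrite eqn_leq.
rewrite (leq_trans (splits_V_dim (splits_mult_V _ _ _ _))) /= ?eqQ ?x0Q //.
apply: leq_mult_V; exists (fun y => const_mx 1), (fun y => const_mx 1); split.
- move=> x y xS yS xy xQ /=; rewrite mul_const_mx !eqQ // xQ xy /=.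
  by case: (y \in Q); rewrite ?mul1r ?mulr1n //; apply/matrixP => i [].
- move=> x y xS yS xy yQ /=; rewrite mul_const_mx !eqQ // yQ xy /=.
  by case: (x \in Q); rewrite ?mul1r ?mulr1n ?mulr0n //; apply/matrixP => -[].
rewrite mul_const_mx; apply: (const_mx_nat_of_bool (b := true)) => _.
by rewrite /= eqQ // x0Q mulr1.
Qed.

Lemma Vrep_not_splits_V_missing S Q Q' x0 x :
  comparably_connected S Q x0 -> x \in S -> x \in Q -> x \notin Q' ->
  ~ splits_V S Q x0 (Vrep K Q') 1.
Proof.
move=> conn xS xQ xNQ' [V [F [hV hF VF1]]].
have := hom_V_comp_const hV hF conn xS xQ.
by rewrite VF1 mulmx_nat_of_false ?(negbTE xNQ') //; apply/eqP; rewrite eq_sym oner_neq0.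
Qed.

Lemma Vrep_not_splits_V_exit S Q Q' x0 u w :
  comparably_connected S Q x0 -> u \in S -> u \in Q -> u \in Q' ->
  w \in S -> w \in Q' -> w \notin Q -> gle u w || gle w u ->
  ~ splits_V S Q x0 (Vrep K Q') 1.
Proof.
(* The map of V_{Q'} between u and w is invertible, while V or F vanishes on it. *)
move=> conn uS uQ uQ' wS wQ' wNQ /orP uw_cmp [V [F [hV hF VF1]]].
have VFu := hom_V_comp_const hV hF conn uS uQ; rewrite VF1 in VFu.
suff VFu0 : V u *m F u = 0.
  by have := oner_neq0 'M[K]_1; rewrite -[1]/(1%:M) -VFu VFu0 eqxx.
have {}wNQ := negbTE wNQ.
case: uw_cmp => [uw | wu].
  have Vu0 := hV u w uS wS uw uQ; rewrite wNQ in Vu0.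
  have Vrep_uwu : pmap (Vrep K Q') u w *m const_mx 1 = 1%:M.
    by rewrite /= mul_const_mx; apply: const_mx_nat_of_bool => _; rewrite uQ' wQ' uw mulr1.
  by rewrite -[F u]mul1mx -Vrep_uwu !mulmxA Vu0 !mul0mx.
have Fu0 := hF w u wS uS wu uQ; rewrite wNQ in Fu0.
have Vrep_uwu : const_mx 1 *m pmap (Vrep K Q') w u = 1%:M.
  by rewrite /= mul_const_mx; apply: const_mx_nat_of_bool => _; rewrite uQ' wQ' wu mul1r.
by rewrite -[F u]mul1mx -Vrep_uwu -mulmxA Fu0 !mulmx0.
Qed.

End IntervalReps.

Section Retract.
Variables (K : fieldType) (m n : nat).
Local Notation vtx := (vtx m n).
Local Notation prep := (prep K m n).
Variables (S : {set vtx}) (N X : prep).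
Variables (phi : forall x, 'M[K]_(pdim X x, pdim N x))
          (psi : forall x, 'M[K]_(pdim N x, pdim X x)).
Hypotheses (N_rep : is_rep S N)
  (phi_psi : forall x, x \in S -> phi x *m psi x = 1%:M)
  (phi_nat : forall x y, x \in S -> y \in S -> gle x y ->
     pmap X x y *m phi y = phi x *m pmap N x y)
  (psi_nat : forall x y, x \in S -> y \in S -> gle x y ->
     pmap N x y *m psi y = psi x *m pmap X x y).

Definition retract_idem x := 1%:M - psi x *m phi x.
Definition compl_inj x := row_base (retract_idem x).
Definition compl_prj x := retract_idem x *m pinvmx (compl_inj x).

(* The image of the idempotent 1 - psi phi, a complement of X in N. *)
Definition retract_compl : prep :=
  @PRep K m n (fun x => \rank (retract_idem x))
    (fun x y => compl_inj x *m pmap N x y *m compl_prj y).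

Lemma retract_idemK x : x \in S -> retract_idem x *m retract_idem x = retract_idem x.
Proof.
move=> xS; rewrite /retract_idem mulmxBl mul1mx mulmxBr mulmx1 mulmxA.
by rewrite -(mulmxA (psi x)) phi_psi // mulmx1 subrr subr0.
Qed.

Lemma retract_idem_nat x y : x \in S -> y \in S -> gle x y ->
  pmap N x y *m retract_idem y = retract_idem x *m pmap N x y.
Proof.
move=> xS yS xy; rewrite /retract_idem mulmxBr mulmxBl mulmx1 mul1mx.
by rewrite mulmxA psi_nat // -mulmxA phi_nat // mulmxA.
Qed.

Lemma compl_prj_inj x : compl_prj x *m compl_inj x = retract_idem x.
Proof. by rewrite /compl_prj mulmxKpV // eq_row_base. Qed.

Lemma compl_inj_idem x : x \in S -> compl_inj x *m retract_idem x = compl_inj x.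
Proof.
move=> xS; have /submxP [D ->] : (compl_inj x <= retract_idem x)%MS by rewrite eq_row_base.
by rewrite -mulmxA retract_idemK.
Qed.

Lemma compl_inj_prj x : x \in S -> compl_inj x *m compl_prj x = 1%:M.
Proof.
move=> xS; apply: (row_free_inj (row_base_free (retract_idem x))).
by rewrite -mulmxA compl_prj_inj compl_inj_idem // mul1mx.
Qed.

Lemma phi_compl_prj x : x \in S -> phi x *m compl_prj x = 0.
Proof.
move=> xS; rewrite /compl_prj mulmxA /retract_idem mulmxBr mulmx1 (mulmxA (phi x)).
by rewrite phi_psi // mul1mx subrr mul0mx.
Qed.

Lemma compl_inj_psi x : x \in S -> compl_inj x *m psi x = 0.
Proof.
move=> xS; rewrite -compl_inj_idem // -mulmxA /retract_idem mulmxBl mul1mx.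
by rewrite -(mulmxA (psi x)) phi_psi // mulmx1 subrr mulmx0.
Qed.

Lemma compl_inj_nat x y : x \in S -> y \in S -> gle x y ->
  compl_inj x *m pmap N x y = pmap retract_compl x y *m compl_inj y.
Proof.
move=> xS yS xy /=; rewrite -(mulmxA _ (compl_prj y)) compl_prj_inj.
by rewrite -(mulmxA (compl_inj x)) retract_idem_nat // mulmxA compl_inj_idem.
Qed.

Lemma compl_prj_nat x y : x \in S -> y \in S -> gle x y ->
  pmap N x y *m compl_prj y = compl_prj x *m pmap retract_compl x y.
Proof.
move=> xS yS xy /=; rewrite (mulmxA (compl_prj x) _ (compl_prj y)).
rewrite (mulmxA (compl_prj x) (compl_inj x)) compl_prj_inj -retract_idem_nat //.
by rewrite -mulmxA /compl_prj (mulmxA (retract_idem y)) retract_idemK.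
Qed.

Lemma retract_compl_rep : is_rep S retract_compl.
Proof.
have [N_id N_comp] := N_rep.
split=> [x xS | x y z xS yS zS xy yz]; first by rewrite /= N_id // mulmx1 compl_inj_prj.
rewrite {1}[pmap retract_compl x y]/= -(mulmxA _ (compl_prj y)) -compl_prj_nat //.
by rewrite -(mulmxA (compl_inj x)) (mulmxA _ (pmap N y z)) N_comp // mulmxA.
Qed.

Lemma retract_dsum : dsum S N (fun b : bool => if b then X else retract_compl).
Proof.
pose inj (b : bool) := match b return
  forall x, 'M_(pdim (if b then X else retract_compl) x, pdim N x) with
  | true => phi | false => compl_inj end.
pose prj (b : bool) := match b return
  forall x, 'M_(pdim N x, pdim (if b then X else retract_compl) x) with
  | true => psi | false => compl_prj end.
exists inj, prj; do ![split].
- by move=> x xS; rewrite big_bool /= compl_prj_inj /retract_idem addrC subrK.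
- by move=> x [] xS /=; [apply: phi_psi | apply: compl_inj_prj].
- by move=> x [] [] // xS _ /=; [apply: phi_compl_prj | apply: compl_inj_psi].
- by move=> x y [] xS yS xy; [rewrite /= phi_nat | apply: compl_inj_nat].
- by move=> x y [] xS yS xy; [rewrite /= psi_nat | apply: compl_prj_nat].
Qed.

Lemma retract_compl0_iso : is_zero S retract_compl -> iso S N X.
Proof.
move=> C0; exists psi, phi; split=> [x xS | x y xS yS xy]; last by rewrite psi_nat.
split; last exact: phi_psi.
have /eqP := C0 x xS; rewrite /= mxrank_eq0 /retract_idem subr_eq0.
by move/eqP <-.
Qed.

End Retract.

Section IntervalSummands.
Variables (K : fieldType) (m n : nat).
Local Notation vtx := (vtx m n).
Local Notation prep := (prep K m n).
Implicit Types (S Q : {set vtx}) (N : prep).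

(* A split copy of V_Q in an indecomposable N splits off as a direct summand,
   which must then be all of N. *)
Lemma splits_V_indecomposable_iso S Q x0 N :
  x0 \in S -> x0 \in Q -> comparably_connected S Q x0 -> convex_in S Q ->
  indecomposable S N -> splits_V S Q x0 N 1 -> iso S N (Vrep K Q).
Proof.
move=> x0S x0Q conn convQ [N_rep [_ N_indec]] [V [F [hV hF VF1]]].
pose phi x : 'M_(pdim (Vrep K Q) x, pdim N x) := const_mx 1 *m V x.
pose psi x : 'M_(pdim N x, pdim (Vrep K Q) x) := F x *m const_mx 1.
have phi_psi x : x \in S -> phi x *m psi x = 1%:M.
  move=> xS; rewrite mulmxA -(mulmxA _ (V x)); apply: const_mx_sandwich => xQ.
  by rewrite (hom_V_comp_const hV hF conn xS xQ).
have phi_nat x y : x \in S -> y \in S -> gle x y ->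
    pmap (Vrep K Q) x y *m phi y = phi x *m pmap N x y.
  move=> xS yS xy; rewrite -mulmxA; apply: const_mx_row_nat => [xQ yQ | xQ].
    by rewrite xQ yQ xy.
  exact: hV.
have psi_nat x y : x \in S -> y \in S -> gle x y ->
    pmap N x y *m psi y = psi x *m pmap (Vrep K Q) x y.
  move=> xS yS xy; rewrite mulmxA; apply: const_mx_col_nat => [xQ yQ | yQ].
    by rewrite xQ yQ xy.
  exact: hF.
have C_rep := retract_compl_rep N_rep phi_psi phi_nat psi_nat.
have [X0 | C0] := N_indec _ _ (Vrep_rep K convQ) C_rep (retract_dsum phi_psi phi_nat psi_nat).
  by have := X0 x0 x0S; rewrite /= x0Q.
exact: retract_compl0_iso phi_psi psi_nat C0.
Qed.

Lemma mult_V_indecomposable S Q x0 N :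
  x0 \in S -> x0 \in Q -> comparably_connected S Q x0 -> convex_in S Q ->
  indecomposable S N -> mult_V S Q x0 N = `[< iso S N (Vrep K Q) >].
Proof.
move=> x0S x0Q conn convQ N_indec; case: asboolP => [isoN | Nniso].
  by rewrite (mult_V_iso _ x0S isoN) (mult_V_Vrep _ x0S x0Q).
apply/eqP; rewrite eqn0Ngt; apply/negP => /mult_V_gt0P split1; apply: Nniso.
exact: splits_V_indecomposable_iso split1.
Qed.

End IntervalSummands.

Section GridIntervals.
Variables (m n : nat).
Local Notation vtx := (vtx m n).
Implicit Types (I J S : {set vtx}).

Lemma garrow_gle (x y : vtx) : garrow x y -> gle x y.
Proof. by rewrite /garrow /gle => /orP [] /andP [/eqP ? /eqP ?]; apply/andP; split; lia. Qed.

Lemma garrow_weight (x y : vtx) : garrow x y -> (x.1 + x.2).+1 = (y.1 + y.2)%N.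
Proof. by rewrite /garrow => /orP [] /andP [/eqP ? /eqP ?]; lia. Qed.

Lemma source_below I x : x \in I -> exists2 s, is_source I s & gle s x.
Proof.
move=> xI; pose P := [pred y : vtx | (y \in I) && gle y x].
have Px : P x by rewrite /= xI gle_refl.
case: (arg_minnP (fun y : vtx => (y.1 + y.2)%N) Px) => s /andP [sI sx] s_min.
exists s => //; rewrite /is_source sI; apply/forall_inP => y yI; apply/negP => ys.
have /s_min : P y by rewrite /= yI (gle_trans (garrow_gle ys) sx).
by have := garrow_weight ys; lia.
Qed.

Lemma sink_above I x : x \in I -> exists2 k, is_sink I k & gle x k.
Proof.
move=> xI; pose P := [pred y : vtx | (y \in I) && gle x y].
have Px : P x by rewrite /= xI gle_refl.
case: (arg_maxnP (fun y : vtx => (y.1 + y.2)%N) Px) => k /andP [kI xk] k_max.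
exists k => //; rewrite /is_sink kI; apply/forall_inP => y yI; apply/negP => ky.
have /k_max : P y by rewrite /= yI (gle_trans xk (garrow_gle ky)).
by have := garrow_weight ky; lia.
Qed.

Lemma ss_set_sub I : ss_set I \subset I.
Proof. by apply/subsetP => x; rewrite inE => /orP [] /andP []. Qed.

Lemma ss_set_sub_ess e I : ss_set I \subset ess_set e I.
Proof.
case: e => /=; [exact: subxx | | exact: ss_set_sub].
by apply/subsetP => x x_ss; rewrite inE (subsetP (ss_set_sub I)) ?imset_f.
Qed.

Lemma ess_set_sub e I : ess_set e I \subset I.
Proof.
case: e => /=; [exact: ss_set_sub | | exact: subxx].
by apply/subsetP => x; rewrite inE => /andP [].
Qed.

Lemma interval_convex I x y z :
  is_interval I -> x \in I -> y \in I -> gle x z -> gle z y -> z \in I.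
Proof.
case/and3P => _ _ /forall_inP convI xI yI xz zy.
by have /forall_inP/(_ y yI)/forallP/(_ z) := convI x xI; rewrite xz zy; apply.
Qed.

Lemma interval_connect I x y :
  is_interval I -> x \in I -> y \in I -> connect (adjI I) x y.
Proof. by case/and3P => _ /forall_inP connI _ xI /(forall_inP (connI x xI)). Qed.

Lemma interval_convex_in S I : is_interval I -> convex_in S I.
Proof. by move=> I_int x y z _ _ _ xI zI; apply: interval_convex. Qed.

(* An interval is the convex hull of its sources and sinks. *)
Lemma interval_subset_ss I J :
  is_interval I -> is_interval J -> ss_set I \subset J -> I \subset J.
Proof.
move=> I_int J_int /subsetP ssJ; apply/subsetP => x xI.
have [s s_src sx] := source_below xI; have [k k_snk xk] := sink_above xI.
by apply: (interval_convex J_int _ _ sx xk); apply: ssJ; rewrite inE ?s_src ?k_snk ?orbT.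
Qed.

Lemma comparable_in_sym S I : symmetric (comparable_in S I).
Proof. by move=> x y; rewrite /comparable_in orbC; do 4 case: (_ \in _). Qed.

Lemma interval_comparably_connected I x0 :
  is_interval I -> x0 \in I -> comparably_connected setT I x0.
Proof.
move=> I_int x0I x _ xI; apply: connect_sub (interval_connect I_int x0I xI).
move=> u v /and3P [uI vI /orP uv]; apply: connect1.
by rewrite /comparable_in !inE uI vI; case: uv => /garrow_gle ->; rewrite ?orbT.
Qed.

Section EssentialVertices.
Variables (I S : {set vtx}).
Hypotheses (I_int : is_interval I) (ssS : ss_set I \subset S) (SI : S \subset I).
Local Notation R := (comparable_in S I).

Lemma comparable_in_ess x y : x \in S -> y \in S -> gle x y -> R x y.
Proof. by move=> xS yS xy; rewrite /R xS yS !(subsetP SI) ?xy. Qed.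

Lemma source_in_ess s : is_source I s -> s \in S.
Proof. by move=> s_src; apply: (subsetP ssS); rewrite inE s_src. Qed.

Lemma sink_in_ess k : is_sink I k -> k \in S.
Proof. by move=> k_snk; apply: (subsetP ssS); rewrite inE k_snk orbT. Qed.

(* Two sources below x are both below a sink above x. *)
Lemma sources_below_connect x s s' : x \in I ->
  is_source I s -> gle s x -> is_source I s' -> gle s' x -> connect R s s'.
Proof.
move=> xI s_src sx s'_src s'x; have [k k_snk xk] := sink_above xI.
have sk : R s k.
  by apply: comparable_in_ess (gle_trans sx xk); [apply: source_in_ess | apply: sink_in_ess].
have s'k : R s' k.
  by apply: comparable_in_ess (gle_trans s'x xk); [apply: source_in_ess | apply: sink_in_ess].
by apply: connect_trans (connect1 sk) (connect1 _); rewrite comparable_in_sym.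
Qed.

Lemma sources_connect s s' : is_source I s -> is_source I s' -> connect R s s'.
Proof.
move=> s_src s'_src.
have [sI s'I] : s \in I /\ s' \in I by case/andP: s_src; case/andP: s'_src.
suff below_s' : forall s1, is_source I s1 -> gle s1 s' -> connect R s s1.
  exact: below_s' s'_src (gle_refl _).
have /connectP [p path_p ->] := interval_connect I_int sI s'I.
elim/last_ind: p path_p => [_ | p y IHp] /=.
  by move=> s1 s1_src s1s; apply: sources_below_connect sI s_src (gle_refl s) s1_src s1s.
rewrite rcons_path last_rcons => /andP [path_p /and3P [xI yI /orP xy]] s1 s1_src s1y.
set x := last s p in IHp xI xy *; have [s2 s2_src s2x] := source_below xI.
case: xy => [/garrow_gle xy | /garrow_gle yx]; last first.
  exact: IHp path_p s1 s1_src (gle_trans s1y yx).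
apply: connect_trans (IHp path_p s2 s2_src s2x) _.
exact: sources_below_connect yI s2_src (gle_trans s2x xy) s1_src s1y.
Qed.

Lemma ess_comparably_connected x0 : x0 \in S -> comparably_connected S I x0.
Proof.
move=> x0S x xS _; have [x0I xI] := (subsetP SI x0 x0S, subsetP SI x xS).
have [s0 s0_src s0x0] := source_below x0I; have [s s_src sx] := source_below xI.
have s0_x0 : R s0 x0 by apply: comparable_in_ess s0x0 => //; apply: source_in_ess.
have s_x : R s x by apply: comparable_in_ess sx => //; apply: source_in_ess.
apply: connect_trans (connect_trans (sources_connect s0_src s_src) (connect1 s_x)).
by rewrite (sym_connect_sym (@comparable_in_sym S I)) connect1.
Qed.

End EssentialVertices.

End GridIntervals.

Section Multiplicities.
Variables (K : fieldType) (m n : nat).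
Local Notation vtx := (vtx m n).
Local Notation prep := (prep K m n).
Implicit Types (I J S Q : {set vtx}) (M N : prep).

Lemma Vrep_interval_rep S J : is_interval J -> is_rep S (Vrep K J).
Proof. by move=> J_int; apply/Vrep_rep/interval_convex_in. Qed.

Lemma mult_V_Vrep_interval J J' x :
  is_interval J -> is_interval J' -> x \in J ->
  mult_V setT J x (Vrep K J') = (J' == J).
Proof.
move=> J_int J'_int xJ; have [-> | neqJ] := eqVneq J' J.
  by apply: mult_V_Vrep; rewrite ?inE.
have conn := interval_comparably_connected J_int xJ.
apply/eqP; rewrite eqn0Ngt; apply/negP => /mult_V_gt0P.
have [/subsetP JJ' | /subsetPn [y yJ yNJ']] := boolP (J \subset J'); last first.
  exact: Vrep_not_splits_V_missing conn (in_setT y) yJ yNJ'.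
have /subsetPn [w wJ' wNJ] : ~~ (J' \subset J).
  by apply: contra neqJ => J'J; rewrite eqEsubset J'J; apply/subsetP.
have conn' := interval_comparably_connected J'_int (JJ' x xJ) (in_setT w) wJ'.
have [u [w' [/and5P [_ uJ' _ w'J' uw'] uJ w'NJ]]] := connect_exit conn' xJ wNJ.
exact: Vrep_not_splits_V_exit conn (in_setT u) uJ uJ' (in_setT w') w'J' w'NJ uw'.
Qed.

Lemma mult_V_Vrep_ess I S J x0 :
  is_interval I -> is_interval J -> ss_set I \subset S -> S \subset I -> x0 \in S ->
  mult_V S I x0 (Vrep K J) = (I \subset J).
Proof.
move=> I_int J_int ssS SI x0S; have x0I := subsetP SI x0 x0S.
have [IJ | IJ] := boolP (I \subset J).
  by apply: mult_V_Vrep => // y /(subsetP SI) yI; rewrite yI (subsetP IJ).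
apply/eqP; rewrite eqn0Ngt; apply/negP => /mult_V_gt0P.
have /subsetPn [y y_ss yNJ] : ~~ (ss_set I \subset J).
  by apply: contra IJ; apply: interval_subset_ss.
have conn := ess_comparably_connected I_int ssS SI x0S.
exact: Vrep_not_splits_V_missing conn (subsetP ssS y y_ss) (subsetP (ss_set_sub I) y y_ss) yNJ.
Qed.

Definition intervals_at x M : nat :=
  \sum_(J | is_interval J && (x \in J)) mult_V setT J x M.

Lemma intervals_at_Vrep J x : is_interval J -> intervals_at x (Vrep K J) = (x \in J).
Proof.
move=> J_int; rewrite /intervals_at (eq_bigr (fun J' => nat_of_bool (J == J'))).
  by rewrite sum_nat_eq J_int.
by move=> J' /andP [J'_int xJ']; rewrite mult_V_Vrep_interval.
Qed.

Lemma intervals_at_dsum x M (Ix : finType) (N : Ix -> prep) :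
  dsum setT M N -> intervals_at x M = (\sum_t intervals_at x (N t))%N.
Proof.
move=> dsumN; rewrite /intervals_at exchange_big /=.
by apply: eq_bigr => J _; apply: mult_V_dsum (in_setT x) dsumN.
Qed.

Lemma intervals_at_interval_decomposable x M :
  is_rep setT M -> interval_decomposable M -> intervals_at x M = pdim M x.
Proof.
move=> [M_id _] [Ix [J [J_int dsumJ]]].
rewrite (intervals_at_dsum _ dsumJ) (pdim_dsum (in_setT x) dsumJ) ?M_id ?inE //.
  by apply: eq_bigr => t _; rewrite intervals_at_Vrep.
by move=> t; have [Vid _] := Vrep_interval_rep setT (J_int t); rewrite Vid ?inE.
Qed.

Lemma intervals_at_iso x N J :
  is_interval J -> iso setT N (Vrep K J) -> intervals_at x N = pdim N x.
Proof.
move=> J_int isoJ; rewrite (iso_pdim (in_setT x) isoJ) [RHS]/= -intervals_at_Vrep //.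
by apply: eq_bigr => J' _; apply: mult_V_iso isoJ.
Qed.

Lemma intervals_at_not_interval x N : indecomposable setT N ->
  (forall J, is_interval J -> ~ iso setT N (Vrep K J)) -> intervals_at x N = 0%N.
Proof.
move=> N_indec not_int; apply: big1 => J /andP [J_int xJ].
rewrite (mult_V_indecomposable (in_setT x) xJ) ?asboolF //.
- exact: not_int.
- exact: interval_comparably_connected.
- exact: interval_convex_in.
Qed.

(* Counting interval summands through x bounds the dimension at x, with equality
   exactly for interval summands; for an interval-decomposable M equality holds
   overall, so no summand can fail to be an interval. *)
Lemma KS_summand_interval M (Ix : finType) (N : Ix -> prep) t :
  is_rep setT M -> interval_decomposable M -> KS_decomp setT M N ->
  exists2 J, is_interval J & iso setT (N t) (Vrep K J).
Proof.
move=> M_rep M_int [N_indec dsumN]; apply: contrapT => Nt_not_int.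
have {}Nt_not_int J : is_interval J -> ~ iso setT (N t) (Vrep K J).
  by move=> J_int isoJ; apply: Nt_not_int; exists J.
have [x Ntx] : exists x, pdim (N t) x != 0%N.
  have [_ [Nt_nz _]] := N_indec t; apply: contrapT => no_x; apply: Nt_nz => x _.
  by apply: contrapT => Ntx; apply: no_x; exists x; apply/eqP.
have le_dim s : (intervals_at x (N s) <= pdim (N s) x)%N.
  have [[J J_int isoJ] | no_J] :=
    pselect (exists2 J, is_interval J & iso setT (N s) (Vrep K J)).
    by rewrite (intervals_at_iso _ J_int isoJ).
  by rewrite intervals_at_not_interval // => J J_int isoJ; apply: no_J; exists J.
have := intervals_at_interval_decomposable x M_rep M_int.
rewrite (intervals_at_dsum _ dsumN) (pdim_dsum (in_setT x) dsumN); first last.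
- by move=> s; have [[Nid _] _] := N_indec s; rewrite Nid ?inE.
- by have [M_id _] := M_rep; rewrite M_id ?inE.
move=> eq_sums; have : (\sum_s (pdim (N s) x - intervals_at x (N s)) == 0)%N.
  by rewrite sumnB // eq_sums subnn.
rewrite sum_nat_eq0 => /forallP/(_ t).
by rewrite intervals_at_not_interval // subn0 (negbTE Ntx).
Qed.

Lemma mult_V_KS S Q x0 M (Ix : finType) (N : Ix -> prep) :
  x0 \in S -> x0 \in Q -> comparably_connected S Q x0 -> convex_in S Q ->
  KS_decomp S M N -> mult_V S Q x0 M = #|[set t | `[< iso S (N t) (Vrep K Q) >]]|.
Proof.
move=> x0S x0Q conn convQ [N_indec dsumN].
rewrite (mult_V_dsum _ x0S dsumN) -sum1_card [RHS]big_mkcond /=.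
by apply: eq_bigr => t _; rewrite inE (mult_V_indecomposable x0S) //; case: asboolP.
Qed.

Lemma iso_Vrep_inj N J J' : iso setT N (Vrep K J) -> iso setT N (Vrep K J') -> J = J'.
Proof.
move=> isoJ isoJ'; apply/setP => x.
have := iso_pdim (in_setT x) isoJ; rewrite (iso_pdim (in_setT x) isoJ') /=.
by case: (x \in J) (x \in J') => -[].
Qed.

Lemma sum_iso_class (Ix : finType) (N : Ix -> prep) (T : {set vtx} -> {set Ix})
    (P : pred {set vtx}) t J0 :
  (forall J t, t \in T J <-> iso setT (N t) (Vrep K J)) ->
  is_interval J0 -> iso setT (N t) (Vrep K J0) ->
  (\sum_(J | is_interval J && P J) (t \in T J))%N = P J0.
Proof.
move=> T_iso J0_int isoJ0; rewrite (eq_bigr (fun J => nat_of_bool (J0 == J))).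
  by rewrite sum_nat_eq J0_int.
move=> J _; congr nat_of_bool; apply/idP/eqP => [/T_iso isoJ | <-].
  exact: iso_Vrep_inj isoJ0 isoJ.
exact/T_iso.
Qed.

End Multiplicities.

Theorem mainTheorem10 (K : fieldType) (m n : nat) (M : prep K m n) :
  (0 < m)%N -> (0 < n)%N ->
  is_rep setT M ->
  interval_decomposable M ->
  forall (I : {set vtx m n}), is_interval I ->
  forall e : ess,
  forall (Ix : finType) (N : Ix -> prep K m n), KS_decomp setT M N ->
  forall T : {set vtx m n} -> {set Ix},
    (forall J t, t \in T J <-> iso setT (N t) (Vrep K J)) ->
  forall (Ix' : finType) (N' : Ix' -> prep K m n),
    KS_decomp (ess_set e I) (restrict (ess_set e I) M) N' ->
  forall T' : {set Ix'},
    (forall t, t \in T' <->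
       iso (ess_set e I) (N' t) (restrict (ess_set e I) (Vrep K I))) ->
  #|T'| = (\sum_(J : {set vtx m n} | is_interval J && (I \subset J)) #|T J|)%N.
Proof.
move=> _ _ M_rep M_int I I_int e Ix N KS_N T T_iso Ix' N' KS_N' T' T'_iso.
set S := ess_set e I; have ssS := ss_set_sub_ess e I; have SI := ess_set_sub e I.
have [x0 x0S] : exists x0, x0 \in S.
  have /set0Pn [y yI] : I != set0 by case/and3P: I_int.
  by have [s s_src _] := source_below yI; exists s; apply: (subsetP ssS); rewrite inE s_src.
have x0I := subsetP SI x0 x0S.
have conn := ess_comparably_connected I_int ssS SI x0S.
have -> : #|T'| = mult_V S I x0 M.
  rewrite (mult_V_KS x0S x0I conn (interval_convex_in I_int) KS_N').
  by apply: eq_card => t; rewrite inE; apply/idP/asboolP => /T'_iso.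
rewrite (mult_V_dsum _ x0S (dsum_subset (subsetT S) KS_N.2)).
rewrite (eq_bigr (fun J => \sum_t nat_of_bool (t \in T J)))%N; last first.
  by move=> J _; rewrite -sum1_card big_mkcond.
rewrite exchange_big; apply: eq_bigr => t _.
have [J J_int isoJ] := KS_summand_interval t M_rep M_int KS_N.
rewrite (mult_V_iso _ x0S (iso_subset (subsetT S) isoJ)).
by rewrite (mult_V_Vrep_ess K I_int J_int ssS SI x0S) (sum_iso_class _ T_iso J_int isoJ).
Qed.
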